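(* Let $G\ge 1$ and $B\ge 1$ be integers, and let $Z\in\{-1,+1\}^{G\times B}$ be a design matrix whose rows correspond to $G$ GEOs (regions) and whose columns correspond to $B$ brands, where $Z_{gb}=+1$ means that brand $b$ receives the treatment (T) in GEO $g$ and $Z_{gb}=-1$ means it receives the control (C). Suppose that each GEO has the treatment for exactly half of the brands (every row of $Z$ contains exactly $B/2$ entries equal to $+1$) and each brand is in the treatment group for exactly half of the GEOs (every column of $Z$ contains exactly $G/2$ entries equal to $+1$). Then it is impossible that simultaneously: (i) for every pair of distinct brands $b\ne b'$, each of the four combinations $(Z_{gb},Z_{gb'})\in\{TT,TC,CT,CC\}$ occurs for the same number of GEOs $g$; and (ii) for every pair of distinct GEOs $g\ne g'$, each of the four combinations $(Z_{gb},Z_{g'b})\in\{TT,TC,CT,CC\}$ occurs for the same number of brands $b$.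
   Context: T denotes the treatment level ($+1$) and C the control level ($-1$); for a pair of brands $b,b'$ the combination at GEO $g$ is the pair of levels $(Z_{gb},Z_{gb'})$, and analogously for a pair of GEOs. *)

From mathcomp Require Import all_boot all_order all_algebra.
Set Implicit Arguments. Unset Strict Implicit. Unset Printing Implicit Defensive.
Import GRing.Theory Num.Theory.
Local Open Scope ring_scope.

Definition levels : seq int := [:: 1; -1].

Definition pm1_matrix (G B : nat) (Z : 'M[int]_(G, B)) : Prop :=
  forall g b, Z g b = 1 \/ Z g b = -1.

Definition brand_pair_count G B (Z : 'M[int]_(G, B)) (b b' : 'I_B) (s t : int) : nat :=
  #|[set g : 'I_G | (Z g b == s) && (Z g b' == t)]|.

Definition geo_pair_count G B (Z : 'M[int]_(G, B)) (g g' : 'I_G) (s t : int) : nat :=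
  #|[set b : 'I_B | (Z g b == s) && (Z g' b == t)]|.

Definition brand_pairs_balanced G B (Z : 'M[int]_(G, B)) : Prop :=
  forall b b' : 'I_B, b != b' ->
    forall s t s' t', s \in levels -> t \in levels -> s' \in levels -> t' \in levels ->
      brand_pair_count Z b b' s t = brand_pair_count Z b b' s' t'.

Definition geo_pairs_balanced G B (Z : 'M[int]_(G, B)) : Prop :=
  forall g g' : 'I_G, g != g' ->
    forall s t s' t', s \in levels -> t \in levels -> s' \in levels -> t' \in levels ->
      geo_pair_count Z g g' s t = geo_pair_count Z g g' s' t'.

(* Balance of every pair of GEOs makes the rows of [Z] pairwise orthogonal, so
   [Z Z^T = B I], and each brand being treated in exactly half of the GEOs makes
   the column sums vanish, i.e. [1 Z = 0].  Hence
   [B G = 1 (Z Z^T) 1^T = (1 Z) (1 Z)^T = 0], which is absurd. *)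
From mathcomp Require Import all_boot all_order all_algebra.
Set Implicit Arguments. Unset Strict Implicit. Unset Printing Implicit Defensive.
Import GRing.Theory Num.Theory.
Local Open Scope ring_scope.

Lemma scalar_gram_col_sum0 (R : comPzRingType) (m n : nat) (A : 'M[R]_(m, n))
    (c : R) :
  A *m A^T = c%:M -> const_mx 1 *m A = 0 :> 'rV_n -> c *+ m = 0.
Proof.
move=> gram col0; set u : 'rV[R]_m := const_mx 1.
have uuT : u *m u^T = (m%:R)%:M.
  apply/matrixP => i j; rewrite !ord1 !mxE (eq_bigr (fun _ => 1)).
    by rewrite sumr_const card_ord.
  by move=> k _; rewrite !mxE mulr1.
have : u *m (A *m A^T) *m u^T = 0.
  by rewrite mulmxA col0 mul0mx mul0mx.
rewrite gram mul_mx_scalar -scalemxAl uuT => /matrixP/(_ 0 0).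
by rewrite !mxE eqxx mulr1n mulr_natr.
Qed.

Lemma sumr_indicator (R : pzSemiRingType) (I : finType) (P : pred I) :
  \sum_(i : I) (P i)%:R = #|[set i | P i]|%:R :> R.
Proof.
rewrite -sum1dep_card natr_sum [RHS]big_mkcond; apply: eq_bigr => i _.
by case: (P i).
Qed.

Section PlusMinusOneVectors.

Variables (I : finType) (x y : I -> int).
Hypotheses (x_pm1 : forall i, x i = 1 \/ x i = -1)
           (y_pm1 : forall i, y i = 1 \/ y i = -1).

Lemma sum_pm1 : \sum_i x i = (2 * #|[set i | x i == 1]|)%:R - #|I|%:R.
Proof.
rewrite natrM -sumr_indicator mulr_sumr -sum1_card natr_sum -sumrB.
by apply: eq_bigr => i _; case: (x_pm1 i) => ->.
Qed.

Lemma sum_pm1_mul :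
  \sum_i x i * y i =
    #|[set i | (x i == 1) && (y i == 1)]|%:R
  - #|[set i | (x i == 1) && (y i == -1)]|%:R
  - #|[set i | (x i == -1) && (y i == 1)]|%:R
  + #|[set i | (x i == -1) && (y i == -1)]|%:R.
Proof.
rewrite -!sumr_indicator -!sumrB -big_split /=; apply: eq_bigr => i _.
by case: (x_pm1 i) => ->; case: (y_pm1 i) => ->.
Qed.

Lemma sum_pm1_sqr : \sum_i x i * x i = #|I|%:R.
Proof.
rewrite -sum1_card natr_sum; apply: eq_bigr => i _.
by case: (x_pm1 i) => ->.
Qed.

End PlusMinusOneVectors.

Lemma col_sum_half (G B : nat) (Z : 'M[int]_(G, B)) :
  pm1_matrix Z ->
  (forall b : 'I_B, (2 * #|[set g : 'I_G | Z g b == 1]| = G)%N) ->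
  const_mx 1 *m Z = 0 :> 'rV_B.
Proof.
move=> pm half; apply/matrixP => i b; rewrite !mxE.
under eq_bigr do rewrite mxE mul1r.
by rewrite (sum_pm1 (fun g => pm g b)) half card_ord subrr.
Qed.

Lemma gram_geo_pairs_balanced (G B : nat) (Z : 'M[int]_(G, B)) :
  pm1_matrix Z -> geo_pairs_balanced Z -> Z *m Z^T = (B%:R)%:M.
Proof.
move=> pm bal; apply/matrixP => g g'; rewrite !mxE.
under eq_bigr do rewrite mxE.
have [<- | neq] := eqVneq g g'; first by rewrite (sum_pm1_sqr (pm g)) card_ord.
rewrite (sum_pm1_mul (pm g) (pm g')).
rewrite -!/(geo_pair_count Z g g' _ _).
by rewrite -!(bal g g' neq 1 1) // subrr sub0r addNr.
Qed.

Theorem theorem1 (G B : nat) (Z : 'M[int]_(G, B)) :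
  (1 <= G)%N -> (1 <= B)%N ->
  pm1_matrix Z ->
  (forall g : 'I_G, (2 * #|[set b : 'I_B | Z g b == 1]| = B)%N) ->
  (forall b : 'I_B, (2 * #|[set g : 'I_G | Z g b == 1]| = G)%N) ->
  ~ (brand_pairs_balanced Z /\ geo_pairs_balanced Z).
Proof.
move=> G_gt0 B_gt0 pm _ col_half [_ geo_bal].
have := scalar_gram_col_sum0 (gram_geo_pairs_balanced pm geo_bal)
                              (col_sum_half pm col_half).
by move/eqP; rewrite mulrn_eq0 pnatr_eq0 !eqn0Ngt G_gt0 B_gt0.
Qed.
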